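(* Fix an integer $k\ge 2$. Let $M$ be the set consisting of the empty composition together with all Fibonacci compositions that start with $(2,1^{k-2})$. Then $M$ is a free monoid under concatenation, and its primes are exactly the compositions of the form $(2,1^{k-2},1^i,q)$ where $i\ge 0$ is an integer and $q$ is either empty or a Fibonacci composition that starts with $2$ and does not contain $(2,1^{k-2})$ as a block of consecutive parts. Moreover, with the weight of a composition being the sum of its parts, the generating function for the primes of $M$ is $\dfrac{x^k}{1-x-x^2+x^k}$, and hence $$1+\frac{x^k}{1-x-x^2}=\Bigl(1-\frac{x^k}{1-x-x^2+x^k}\Bigr)^{-1}.$$
   Context: A Fibonacci composition is a composition (finite sequence of positive integers) all of whose parts are $1$ or $2$; the Fibonacci compositions form the free monoid $\{1,2\}^*$ under concatenation. $1^j$ denotes $j$ consecutive parts equal to $1$. A free monoid is one in which every element factors uniquely as a product of elements of a set of primes. The generating function of a set $S$ of compositions is $\sum_{c\in S} x^{|c|}$ where $|c|$ is the sum of the parts of $c$. *)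

From mathcomp Require Import all_boot all_order all_algebra.
Set Implicit Arguments. Unset Strict Implicit. Unset Printing Implicit Defensive.
Import GRing.Theory Num.Theory.

(* Compositions are finite sequences of positive integers: seq nat. *)
Definition fibcomp (c : seq nat) : bool := all (fun p => (p == 1) || (p == 2)) c.

Definition weight (c : seq nat) : nat := sumn c.

Definition blk (k : nat) : seq nat := 2 :: nseq (k - 2) 1.

Definition inM (k : nat) (c : seq nat) : bool :=
  (c == [::]) || (fibcomp c && prefix (blk k) c).

Definition submonoid (S : pred (seq nat)) : Prop :=
  S [::] /\ forall a b, S a -> S b -> S (a ++ b).

(* primes (irreducibles) of S: nonidentity elements of S that are not a
   concatenation of two nonidentity elements of S.  (a ++ b = c forces
   a = take i c, b = drop i c with i = size a.) *)
Definition primeS (S : pred (seq nat)) (c : seq nat) : bool :=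
  [&& S c, c != [::] &
      ~~ has (fun i => S (take i c) && S (drop i c)) (iota 1 (size c).-1)].

Definition free_monoid (S : pred (seq nat)) : Prop :=
  submonoid S /\
  forall c, S c -> exists! ps : seq (seq nat), all (primeS S) ps /\ flatten ps = c.

Fixpoint words12 (l : nat) : seq (seq nat) :=
  if l is l'.+1 then [seq x :: w | x <- [:: 1; 2], w <- words12 l'] else [:: [::]].

Definition fibcomps (n : nat) : seq (seq nat) :=
  [seq c <- flatten [seq words12 l | l <- iota 0 n.+1] | weight c == n].

(* number of Fibonacci compositions of weight n in S, i.e. the coefficient of
   x^n in the generating function of S (for S a set of Fibonacci compositions) *)
Definition gfcoef (S : pred (seq nat)) (n : nat) : int := (count S (fibcomps n))%:Z.

(* coefficient of x^n in x^j * F(x), where f n = [x^n] F(x) *)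
Definition shiftc (f : nat -> int) (j n : nat) : int :=
  if (j <= n)%N then f (n - j)%N else 0.

From mathcomp Require Import all_boot all_order all_algebra zify ring lra.
Import GRing.Theory Num.Theory.

Set Implicit Arguments.
Unset Strict Implicit.
Unset Printing Implicit Defensive.

(* 1. Enumeration.  fc n lists the Fibonacci compositions of weight n by
      their first part; it is a permutation of fibcomps n, and the words of
      fc n beginning with a fixed word w are exactly w ++ fc (n - |w|).
   2. Factorization in any set S of words: every element is a product of
      primes, and factorizations are unique as soon as the shorter of two
      prime prefixes of a word is always the other one.
   3. For M_k, primes are b ++ r with r avoiding b; since b cannot overlap
      a later occurrence of itself, the prime-prefix condition holds.
   4. Counting: G(x) = 1 + x^k F(x) and P(x) = x^k A(x), where F counts
      Fibonacci compositions, (1-x-x^2) F = 1, and A counts those avoiding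
      b, (1-x-x^2+x^k) A = 1.  These give the two rational identities, and
      G (1-P) = 1 follows by computing with polynomials modulo x^(N+1). *)

Fixpoint fc (n : nat) : seq (seq nat) :=
  if n is n'.+1 then
    map (cons 1) (fc n') ++ (if n' is m.+1 then map (cons 2) (fc m) else [::])
  else [:: [::]].

Lemma fcSS n : fc n.+2 = map (cons 1) (fc n.+1) ++ map (cons 2) (fc n).
Proof. by []. Qed.

Lemma cons_inj (a : nat) : injective (cons a).
Proof. by move=> ? ? []. Qed.

Lemma mem_cons_map (a x : nat) c (s : seq (seq nat)) :
  (x :: c \in map (cons a) s) = (x == a) && (c \in s).
Proof.
have [->|neq_xa] := eqVneq x a; first by rewrite mem_map // => ? ? [].
by apply/mapP => -[? _ [eq_xa _]]; rewrite eq_xa eqxx in neq_xa.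
Qed.

Lemma nil_notin_map (a : nat) (s : seq (seq nat)) : ([::] \in map (cons a) s) = false.
Proof. by apply/mapP => -[]. Qed.

Lemma fibcomp_cat c d : fibcomp (c ++ d) = fibcomp c && fibcomp d.
Proof. exact: all_cat. Qed.

Lemma weight_cat c d : weight (c ++ d) = weight c + weight d.
Proof. exact: sumn_cat. Qed.

Lemma weight_nseq1 j : weight (nseq j 1) = j.
Proof. by elim: j => //= j IH; rewrite /weight /= -/(weight _) IH. Qed.

Lemma fibcomp_nseq1 j : fibcomp (nseq j 1).
Proof. by rewrite /fibcomp all_nseq orTb orbT. Qed.

Lemma mem_fc n c : (c \in fc n) = fibcomp c && (weight c == n).
Proof.
elim/ltn_ind: n c => -[|n] IH [|x c] //=.
- by rewrite inE; case: x => [|x]; rewrite //= addSn andbF.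
- by rewrite mem_cat nil_notin_map; case: n {IH} => [|n]; rewrite ?nil_notin_map.
rewrite mem_cat mem_cons_map IH // /fibcomp /weight /= -/(fibcomp c) -/(weight c).
case: n IH => [|n] IH; rewrite ?in_nil ?mem_cons_map ?IH //.
  by case: (fibcomp c); case: x => [|[|[|x]]]; rewrite //= ?add1n ?eqSS ?orbF ?andbF.
by case: (fibcomp c); case: x => [|[|[|x]]]; rewrite //= ?add1n ?add2n ?eqSS ?orbF.
Qed.

Lemma uniq_fc n : uniq (fc n).
Proof.
elim/ltn_ind: n => -[|n] IH //=; rewrite cat_uniq (map_inj_uniq (@cons_inj 1)) IH //.
case: n IH => [|n] IH; rewrite ?andbT // (map_inj_uniq (@cons_inj 2)) IH // andbT.
by apply/hasPn => _ /mapP[c _ ->]; rewrite mem_cons_map.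
Qed.

Lemma words12S l : words12 l.+1 = map (cons 1) (words12 l) ++ map (cons 2) (words12 l).
Proof. by rewrite /= cats0. Qed.

Lemma mem_words12 l c : (c \in words12 l) = (size c == l) && fibcomp c.
Proof.
elim: l c => [|l IH] [|x c]; rewrite ?words12S ?mem_cat ?nil_notin_map //=.
rewrite !mem_cons_map !IH eqSS /fibcomp /= -/(fibcomp c).
by case: (x == 1); case: (x == 2); case: (size c == l); case: (fibcomp c).
Qed.

Lemma uniq_words12 l : uniq (words12 l).
Proof.
elim: l => [|l IH] //; rewrite words12S cat_uniq !(map_inj_uniq (@cons_inj _)) IH /= andbT.
by apply/hasPn => _ /mapP[c _ ->]; rewrite mem_cons_map.
Qed.

Lemma size_le_weight c : fibcomp c -> size c <= weight c.
Proof.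
elim: c => [|x c IH] //= /andP[/orP[]/eqP-> /IH]; rewrite /weight /= -/(weight c); lia.
Qed.

Lemma perm_fibcomps n : perm_eq (fibcomps n) (fc n).
Proof.
apply: uniq_perm; last 1 first.
- move=> c; rewrite mem_fc mem_filter andbC.
  have [wc|] := eqVneq (weight c) n; rewrite ?andbF ?andbT //.
  apply/flatten_mapP/idP => [[l _]|Fc]; first by rewrite mem_words12 => /andP[].
  exists (size c); last by rewrite mem_words12 eqxx.
  by rewrite mem_iota add0n ltnS -wc size_le_weight.
- rewrite filter_uniq //; elim: n.+1 0 => [|r IH] m //=.
  rewrite cat_uniq uniq_words12 IH andbT /=; apply/hasPn => c /flatten_mapP[l].
  rewrite mem_iota !mem_words12 => /andP[lt_ml _] /andP[/eqP sc _].
  by apply/negP => /andP[/eqP sc' _]; lia.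
- exact: uniq_fc.
Qed.

Lemma gfcoefE (S : pred (seq nat)) n : gfcoef S n = Posz (count S (fc n)).
Proof. by rewrite /gfcoef (permP (perm_fibcomps n)). Qed.

Lemma perm_prefix w n : fibcomp w -> weight w <= n ->
  perm_eq [seq c <- fc n | prefix w c] (map (cat w) (fc (n - weight w))).
Proof.
move=> Fw le_wn; apply: uniq_perm.
- exact/filter_uniq/uniq_fc.
- rewrite map_inj_uniq ?uniq_fc // => r s /(congr1 (drop (size w))).
  by rewrite !drop_size_cat.
move=> c; rewrite mem_filter mem_fc; apply/andP/mapP => [[/prefixP[r ->]]|[r]].
  rewrite fibcomp_cat weight_cat Fw /= => /andP[Fr /eqP wr].
  by exists r; rewrite // mem_fc Fr; apply/eqP; lia.
rewrite mem_fc => /andP[Fr /eqP wr] ->.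
by rewrite prefix_prefix fibcomp_cat weight_cat Fw Fr wr; split => //; apply/eqP; lia.
Qed.

Lemma count_prefix w (P : pred (seq nat)) n : fibcomp w ->
  count (fun c => prefix w c && P c) (fc n) =
  if weight w <= n then count (fun r => P (w ++ r)) (fc (n - weight w)) else 0.
Proof.
move=> Fw; have -> : count (fun c => prefix w c && P c) (fc n) =
                    count P [seq c <- fc n | prefix w c].
  by rewrite count_filter; apply: eq_count => c; rewrite /= andbC.
case: ifP => [le_wn|]; first by rewrite (permP (perm_prefix Fw le_wn)) count_map.
move=> /negbT; rewrite -ltnNge => lt_nw.
apply/eqP; rewrite eqn0Ngt -has_count; apply/hasPn => c; rewrite mem_filter mem_fc.
case/andP=> /prefixP[r ->] /andP[_ /eqP]; rewrite weight_cat; lia.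
Qed.

Definition nfib n := size (fc n).

Lemma nfib_rec n : nfib n.+2 = nfib n.+1 + nfib n.
Proof. by rewrite /nfib fcSS size_cat !size_map. Qed.

Lemma count_split (T : Type) (p a : pred T) s :
  count a s = count (fun x => p x && a x) s + count (fun x => ~~ p x && a x) s.
Proof. by elim: s => //= x s ->; case: (p x); case: (a x) => /=; lia. Qed.

Section Factorization.
Variable S : pred (seq nat).

Lemma primeS_cat a b : primeS S (a ++ b) -> S a -> S b -> (a == [::]) || (b == [::]).
Proof.
case/and3P=> _ _ /hasPn /(_ (size a)) nsplit Sa Sb.
have [//|na] := eqVneq a [::]; have [//|nb] := eqVneq b [::].
move: nsplit; rewrite take_size_cat // drop_size_cat // Sa Sb; apply.
move: na nb; rewrite mem_iota size_cat -!size_eq0 -!lt0n -subn1.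
by move: (size a) (size b); lia.
Qed.

Lemma prime_factorization c : S c -> exists ps, all (primeS S) ps /\ flatten ps = c.
Proof.
elim: {c}(size c).+1 {-2}c (ltnSn (size c)) => // n IH c lt_cn Sc.
have [->|nc] := eqVneq c [::]; first by exists [::].
have [Pc|nPc] := boolP (primeS S c); first by exists [:: c]; rewrite /= Pc cats0.
move: nPc; rewrite /primeS Sc nc /= negbK => /hasP[i]; rewrite mem_iota => i_bd /andP[Sl Sr].
have [ps [Pps def_l]] := IH (take i c) ltac:(rewrite size_take; case: ifP; lia) Sl.
have [qs [Pqs def_r]] := IH (drop i c) ltac:(rewrite size_drop; lia) Sr.
by exists (ps ++ qs); rewrite all_cat Pps Pqs flatten_cat def_l def_r cat_take_drop.
Qed.

Hypothesis S_monoid : submonoid S.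

Lemma submonoid_flatten ps : all (primeS S) ps -> S (flatten ps).
Proof.
case: S_monoid => S_nil S_cat.
by elim: ps => //= p ps IH /andP[/and3P[Sp _ _] /IH]; apply: S_cat.
Qed.

(* If a prime factor can always be read off as the shortest prime prefix,
   factorizations are unique, so S is free. *)
Hypothesis prime_prefix : forall p q x y, primeS S p -> primeS S q -> S x -> S y ->
  p ++ x = q ++ y -> size p <= size q -> p = q.

Lemma free_of_prime_prefix : free_monoid S.
Proof.
split=> // c Sc; have [ps [Pps def_c]] := prime_factorization Sc.
exists ps; split=> // qs [Pqs]; rewrite -{}def_c.
elim: ps qs Pps Pqs => [|p ps IH] [|q qs] //=.
- by move=> _ /andP[/and3P[_ + _] _]; case: q.
- by move=> /andP[/and3P[_ + _] _] _; case: p.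
case/andP=> Pp Pps /andP[Pq Pqs] eq_pq.
have Sps := submonoid_flatten Pps; have Sqs := submonoid_flatten Pqs.
have eq_p : p = q.
  have [le|/ltnW le] := leqP (size p) (size q).
    exact: prime_prefix Pp Pq Sps Sqs (esym eq_pq) le.
  exact/esym/(prime_prefix Pq Pp Sqs Sps eq_pq le).
subst q; congr cons; apply: IH => //.
by move/(congr1 (drop (size p))): eq_pq; rewrite !drop_size_cat.
Qed.

End Factorization.

Section FibMonoid.
Variable k : nat.
Hypothesis hk : 2 <= k.
Local Notation b := (blk k).
Local Notation M := (inM k).

Lemma size_blk : size b = k.-1.
Proof. by rewrite /blk /= size_nseq; lia. Qed.

Lemma weight_blk : weight b = k.
Proof. by rewrite /blk /weight /= -/(weight _) weight_nseq1; lia. Qed.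

Lemma fibcomp_blk : fibcomp b.
Proof. exact: fibcomp_nseq1 (k - 2). Qed.

Lemma inM_cons c : c != [::] -> M c = fibcomp c && prefix b c.
Proof. by rewrite /inM => /negbTE ->. Qed.

Lemma inM_blk_cat r : fibcomp r -> M (b ++ r).
Proof. by move=> Fr; rewrite inM_cons // fibcomp_cat fibcomp_blk Fr prefix_prefix. Qed.

Lemma submonoid_inM : submonoid M.
Proof.
split=> [|x y]; first by rewrite /inM eqxx.
have [->|nx] := eqVneq x [::]; first by [].
have nxy : x ++ y != [::] by case: x nx.
rewrite (inM_cons nx) (inM_cons nxy) => /andP[Fx Px] /orP[/eqP->|/andP[Fy _]].
  by rewrite cats0 Fx Px.
by rewrite fibcomp_cat Fx Fy prefix_catl.
Qed.

(* Primes of M: Fibonacci words b ++ r where r does not contain b; a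
   factorization of b ++ r is exactly a cut at an occurrence of b in r. *)
Lemma primeE c : primeS M c = [&& fibcomp c, prefix b c & ~~ infix b (drop (size b) c)].
Proof.
have [->|nc] := eqVneq c [::]; first by [].
rewrite /primeS inM_cons // nc -andbA andTb; have [Fc|] := boolP (fibcomp c); last by [].
have [/prefixP[r def_c]|] := boolP (prefix b c); last by [].
rewrite !andTb; congr negb; subst c.
move: Fc; rewrite drop_size_cat // fibcomp_cat fibcomp_blk andTb => Fr.
apply/hasP/idP => [[i]|/infixP[u [v def_r]]].
  rewrite mem_iota -subn1 => i_bd /andP[Ml Mr].
  have ni : i < size (b ++ r) by move: (size (b ++ r)) i_bd; lia.
  have [nl nr] : take i (b ++ r) != [::] /\ drop i (b ++ r) != [::].
    by rewrite -!size_eq0 size_take size_drop ni; move: (size (b ++ r)) ni i_bd; lia.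
  move: Ml Mr; rewrite !inM_cons // => /andP[_ pre_l] /andP[_ pre_r].
  have := size_prefix pre_l; rewrite size_take ni => le_bi.
  move: pre_r; rewrite drop_cat ltnNge le_bi /= => /prefixW /infix_trans; apply.
  exact: infix_drop.
exists (size b + size u).
  rewrite mem_iota size_cat def_r !size_cat size_blk -subn1.
  by move: (size u) (size v); lia.
move: Fr; rewrite def_r !fibcomp_cat => /and3P[Fu _ Fv].
rewrite catA take_size_cat ?size_cat // drop_size_cat ?size_cat //.
by rewrite inM_blk_cat // inM_cons ?fibcomp_cat ?fibcomp_blk ?Fu ?Fv ?prefix_prefix.
Qed.

Lemma split_ones r : fibcomp r ->
  exists i q, r = nseq i 1 ++ q /\ (q = [::] \/ head 0 q = 2).
Proof.
elim: r => [|x r IH]; first by exists 0, [::]; split; [|left].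
case/andP=> /orP[]/eqP-> /IH[i [q [-> Hq]]]; first by exists i.+1, q.
by exists 0, (2 :: nseq i 1 ++ q); split; [|right].
Qed.

(* b starts with 2, so prepending 1's creates no new occurrence of b. *)
Lemma infix_blk_ones i q : infix b (nseq i 1 ++ q) = infix b q.
Proof. by elim: i => //= i ->; rewrite /blk /= orFb. Qed.

Lemma prime_form c : primeS M c <->
  exists i q, c = b ++ nseq i 1 ++ q /\
    (q = [::] \/ [/\ fibcomp q, head 0 q = 2 & ~~ infix b q]).
Proof.
rewrite primeE; split => [/and3P[Fc /prefixP[r def_c]]|[i [q [-> Hq]]]].
  subst c; rewrite drop_size_cat // => nbr; move: Fc; rewrite fibcomp_cat => /andP[_ Fr].
  have [i [q [def_r Hq]]] := split_ones Fr; exists i, q; split; first by rewrite def_r.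
  case: Hq => [|q2]; [by left | right]; move: Fr nbr.
  by rewrite def_r fibcomp_cat infix_blk_ones => /andP[_ Fq].
rewrite prefix_prefix drop_size_cat // infix_blk_ones !fibcomp_cat fibcomp_blk fibcomp_nseq1.
by case: Hq => [->|[-> _ ->]].
Qed.

(* b cannot overlap a later occurrence of itself: its parts after the first
   are all 1, whereas b starts with 2. *)
Lemma blk_no_overlap t y : 0 < size t < size b -> prefix b (t ++ y) -> ~~ prefix b y.
Proof.
move=> /andP[t_gt0 t_lt] /prefixP[s] eq_ty; apply/negP => /prefixP[s' def_y].
have := congr1 (nth 0 ^~ (size t)) eq_ty; rewrite nth_cat ltnn subnn def_y /=.
move: t_lt; rewrite size_blk; case: (size t) t_gt0 => //= j _ lt_jk.
have lt_j : j < k - 2 by lia.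
by rewrite nth_cat size_nseq lt_j nth_nseq lt_j.
Qed.

Lemma prime_prefix_inM p q x y : primeS M p -> primeS M q -> M x -> M y ->
  p ++ x = q ++ y -> size p <= size q -> p = q.
Proof.
move=> Pp Pq Mx My eq_pq le_pq.
have def_q : q = p ++ drop (size p) q.
  by rewrite -{1}(cat_take_drop (size p) q) -(takel_cat y le_pq) -eq_pq take_size_cat.
move: (drop _ q) def_q => t def_q; rewrite {q le_pq}def_q in Pq eq_pq *.
have def_x : x = t ++ y by move/(congr1 (drop (size p))): eq_pq; rewrite -catA !drop_size_cat.
have [t0|nt] := eqVneq t [::]; first by rewrite t0 cats0.
have nx : x != [::] by rewrite def_x -size_eq0 size_cat addn_eq0 size_eq0 (negbTE nt).
move: Mx; rewrite inM_cons // def_x fibcomp_cat => /andP[/andP[Ft _] pre_ty].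
have [le_bt|lt_tb] := leqP (size b) (size t).
  have Mt : M t by rewrite inM_cons // Ft prefixE -(takel_cat y le_bt) -prefixE.
  move/primeS_cat: Pq => /(_ _ _); case/and3P: Pp => Mp np _.
  by rewrite (negbTE np) (negbTE nt) => /(_ Mp Mt).
have ny : y != [::].
  apply: contraTneq lt_tb => y0; rewrite -leqNgt; apply: size_prefix.
  by rewrite y0 cats0 in pre_ty.
move: My; rewrite inM_cons // => /andP[_ pre_y].
have t_bd : 0 < size t < size b by rewrite lt0n size_eq0 nt.
by case/negP: (blk_no_overlap t_bd pre_ty).
Qed.

Lemma free_inM : free_monoid M.
Proof. exact: free_of_prime_prefix submonoid_inM prime_prefix_inM. Qed.

Definition navoid n := count (fun r => ~~ infix b r) (fc n).

(* The elements of M of weight n > 0 are b ++ r with |r| = n - k, and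
   the primes are those where r avoids b. *)
Lemma count_inM n : count M (fc n) = (n == 0) + (if k <= n then nfib (n - k) else 0).
Proof.
case: n => [|n]; first by rewrite /= /inM /=; case: ifP => //; lia.
rewrite (@eq_in_count _ _ (fun c => prefix b c && predT c)) => [|c].
  by rewrite count_prefix ?fibcomp_blk // weight_blk /nfib -size_filter filter_predT.
rewrite mem_fc => /andP[Fc wc]; rewrite andbT inM_cons ?Fc //.
by apply: contraTneq wc => ->.
Qed.

Lemma count_primes n : count (primeS M) (fc n) = if k <= n then navoid (n - k) else 0.
Proof.
rewrite (@eq_in_count _ _ (fun c => prefix b c && ~~ infix b (drop (size b) c))) => [|c].
  rewrite count_prefix ?fibcomp_blk // weight_blk; case: ifP => // _.
  by apply: eq_count => r; rewrite /= drop_size_cat.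
by rewrite mem_fc primeE => /andP[-> _].
Qed.

(* A word 2 :: c avoids b unless c starts with 1^(k-2); removing those
   1's gives the correction term. *)
Lemma navoid_rec n :
  navoid n.+2 + (if k - 2 <= n then navoid (n - (k - 2)) else 0) = navoid n.+1 + navoid n.
Proof.
pose avoid := fun c => ~~ infix b c; pose ones := nseq (k - 2) 1.
have -> : navoid n = count (fun c => prefix ones c && avoid c) (fc n) +
                     count (fun c => ~~ prefix ones c && avoid c) (fc n).
  exact: count_split.
rewrite count_prefix ?fibcomp_nseq1 // weight_nseq1 /navoid fcSS count_cat !count_map.
have -> : count (preim (cons 1) avoid) (fc n.+1) = navoid n.+1.
  by apply: eq_count => c; rewrite /= /avoid -(infix_blk_ones 1).
have -> : count (preim (cons 2) avoid) (fc n) =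
          count (fun c => ~~ prefix ones c && avoid c) (fc n).
  by apply: eq_count => c; rewrite /= /avoid /blk /= negb_or.
have -> : count (fun r => avoid (ones ++ r)) (fc (n - (k - 2))) = navoid (n - (k - 2)).
  by apply: eq_count => r; rewrite /avoid infix_blk_ones.
by case: ifP => _; lia.
Qed.

End FibMonoid.

Section Series.
Local Open Scope ring_scope.

Lemma shiftc0 (f : nat -> int) n : shiftc f 0 n = f n.
Proof. by rewrite /shiftc subn0. Qed.

Lemma eq_shiftc (f g : nat -> int) j n : f =1 g -> shiftc f j n = shiftc g j n.
Proof. by move=> fg; rewrite /shiftc fg. Qed.

Lemma shiftc_shiftc (f : nat -> int) i j n :
  shiftc (shiftc f i) j n = if (i <= n)%N then shiftc f j (n - i) else 0.
Proof.
rewrite /shiftc; case: (leqP j n) => le_jn; case: (leqP i n) => le_in //.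
- have -> : (i <= n - j)%N = (j <= n - i)%N by apply/idP/idP; lia.
  by rewrite subnAC.
- by rewrite ifF //; lia.
- by rewrite ifF //; lia.
Qed.

Lemma shiftcD (f g : nat -> int) j n :
  shiftc (fun m => f m + g m) j n = shiftc f j n + shiftc g j n.
Proof. by rewrite /shiftc; case: ifP; rewrite ?addr0. Qed.

Lemma shiftc_delta j n : shiftc (fun m => (m == 0)%N%:R) j n = (n == j)%:R :> int.
Proof.
rewrite /shiftc; case: leqP => le; last by rewrite (_ : (n == j) = false) //; lia.
by rewrite (_ : (n - j == 0)%N = (n == j)) //; lia.
Qed.

Lemma shiftc_recurrence (h e : nat -> int) (c : int) i j :
  (forall m, h m - shiftc h 1 m - shiftc h 2 m + c * shiftc h j m = e m) ->
  forall n, shiftc h i n - shiftc (shiftc h i) 1 n - shiftc (shiftc h i) 2 n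
            + c * shiftc (shiftc h i) j n = shiftc e i n.
Proof.
move=> hE n; rewrite !shiftc_shiftc [shiftc h i n]/shiftc [shiftc e i n]/shiftc.
by case: leqP => _; [exact: hE | rewrite !subr0 mulr0 addr0].
Qed.

End Series.

Section Truncation.
Local Open Scope ring_scope.
Variables (R : comNzRingType) (N : nat).

(* u vanishes modulo x^(N+1): the truncated power series of u is zero. *)
Definition lowzero (u : {poly R}) := forall i, (i <= N)%N -> u`_i = 0.

Lemma lowzero_comb u v a b : lowzero u -> lowzero v -> lowzero (u * a + v * b).
Proof.
have lowM w z i : lowzero w -> (i <= N)%N -> (w * z)`_i = 0.
  move=> w0 le_iN; rewrite coefM big1 // => j _.
  by rewrite w0 ?mul0r // (leq_trans (leq_ord j)).
by move=> u0 v0 i le_iN; rewrite coefD !lowM ?addr0.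
Qed.

Lemma lowzero_cancel q w : lowzero (q * w) -> w`_0 = 1 -> lowzero q.
Proof.
move=> qw0 w0; elim/ltn_ind=> i IH le_iN.
have := qw0 i le_iN; rewrite coefM big_ord_recr /= subnn w0 mulr1 big1 ?add0r // => j _.
by rewrite IH ?mul0r // (leq_trans _ le_iN) // ltnW.
Qed.

End Truncation.

Section SeriesInverse.
Local Open Scope ring_scope.

Lemma coef_truncMXn (f : nat -> int) N j i : (i <= N)%N ->
  ((\poly_(l < N.+1) f l) * 'X^j)`_i = shiftc f j i.
Proof.
move=> le_iN; rewrite coefMXn /shiftc; case: (leqP j i) => // le_ji.
by rewrite coef_poly ltnS (leq_trans (leq_subr _ _) le_iN).
Qed.

Lemma series_inverse (g p : nat -> int) (k : nat) : (0 < k)%N ->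
  (forall n, g n - shiftc g 1 n - shiftc g 2 n
             = (n == 0%N)%:R - (n == 1%N)%:R - (n == 2%N)%:R + (n == k)%:R) ->
  (forall n, p n - shiftc p 1 n - shiftc p 2 n + shiftc p k n = (n == k)%:R) ->
  forall N, g N - \sum_(j < N.+1) p j * g (N - j)%N = (N == 0%N)%:R.
Proof.
move=> k_gt0 gE pE N.
pose G := \poly_(l < N.+1) g l; pose P := \poly_(l < N.+1) p l.
pose U : {poly int} := 1 - 'X - 'X^2; pose D := U + 'X^k.
have trunc_coef (f : nat -> int) i : (i <= N)%N -> (\poly_(l < N.+1) f l)`_i = f i.
  by move=> le_iN; rewrite coef_poly ltnS le_iN.
have GU : lowzero N (G * U - D).
  move=> i le_iN; have -> : G * U - D = G * 'X^0 - G * 'X^1 - G * 'X^2 - D.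
    by rewrite /U; ring.
  rewrite !coefB !coef_truncMXn // shiftc0 gE /D /U.
  by rewrite !(coefD, coefN, coef1, coefX, coefXn) subrr.
have PD : lowzero N (P * D - 'X^k).
  move=> i le_iN; have -> : P * D - 'X^k = P * 'X^0 - P * 'X^1 - P * 'X^2 + P * 'X^k - 'X^k.
    by rewrite /D /U; ring.
  by rewrite !(coefD, coefN) !coef_truncMXn // shiftc0 pE coefXn subrr.
have UD0 : (U * D)`_0 = 1.
  rewrite coef0M /D /U !(coefD, coefN, coef1, coefX, coefXn) /=.
  by rewrite eq_sym (negbTE (lt0n_neq0 k_gt0)) /=; ring.
have : lowzero N (G * (1 - P) - 1).
  apply: lowzero_cancel UD0.
  have -> : (G * (1 - P) - 1) * (U * D) =
            (G * U - D) * (U - (P * D - 'X^k)) + (P * D - 'X^k) * (- D).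
    by rewrite /D; ring.
  exact: lowzero_comb.
move/(_ N (leqnn N)); rewrite coefB coef1 mulrBr mulr1 coefB trunc_coef // mulrC coefM.
move/eqP; rewrite subr_eq0 => /eqP <-; congr (_ - _).
by apply: eq_bigr => j _; rewrite !trunc_coef // ?leq_subr // -ltnS.
Qed.

End SeriesInverse.

Section GeneratingFunctions.
Local Open Scope ring_scope.
Variable k : nat.
Hypothesis hk : (2 <= k)%N.
Local Notation M := (inM k).
Local Notation F := (fun m => Posz (nfib m)).
Local Notation A := (fun m => Posz (navoid k m)).

Lemma gfcoef_inM n : gfcoef M n = (n == 0%N)%:R + shiftc F k n.
Proof. by rewrite gfcoefE count_inM // PoszD /shiftc; case: (n == 0%N); case: ifP. Qed.

Lemma gfcoef_primes n : gfcoef (primeS M) n = shiftc A k n.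
Proof. by rewrite gfcoefE count_primes // /shiftc; case: ifP. Qed.

(* (1 - x - x^2) F(x) = 1, written with a zero x^0 term to match the
   shape of shiftc_recurrence. *)
Lemma fib_series n : F n - shiftc F 1 n - shiftc F 2 n + 0 * shiftc F 0 n = (n == 0%N)%:R.
Proof.
rewrite mul0r addr0 /shiftc; case: n => [|[|n]] //=.
by rewrite !subSS !subn0 nfib_rec PoszD; ring.
Qed.

Lemma navoid_series n : A n - shiftc A 1 n - shiftc A 2 n + 1 * shiftc A k n = (n == 0%N)%:R.
Proof.
rewrite mul1r /shiftc; case: n => [|[|n]] /=.
- by rewrite ifF //; lia.
- rewrite ifF; last lia.
  by rewrite /navoid /= /blk /=; case: (k - 2)%N.
have := congr1 Posz (navoid_rec hk n); rewrite !subSS !subn0.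
have -> : (k <= n.+2)%N = (k - 2 <= n)%N by lia.
have -> : (n.+2 - k = n - (k - 2))%N by lia.
by case: ifP => _; rewrite ?addn0 !PoszD => E; lra.
Qed.

Lemma primes_series n :
  gfcoef (primeS M) n - shiftc (gfcoef (primeS M)) 1 n
    - shiftc (gfcoef (primeS M)) 2 n + shiftc (gfcoef (primeS M)) k n = (n == k)%:R.
Proof.
rewrite gfcoef_primes !(eq_shiftc _ _ gfcoef_primes) -shiftc_delta -[shiftc (shiftc _ k) k n]mul1r.
exact: shiftc_recurrence navoid_series n.
Qed.

Lemma inM_series n :
  gfcoef M n - shiftc (gfcoef M) 1 n - shiftc (gfcoef M) 2 n
    = (n == 0%N)%:R - (n == 1%N)%:R - (n == 2%N)%:R + (n == k)%:R.
Proof.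
have shiftG j : shiftc (gfcoef M) j n = (n == j)%:R + shiftc (shiftc F k) j n.
  by rewrite (eq_shiftc _ _ gfcoef_inM) shiftcD shiftc_delta.
have := shiftc_recurrence k fib_series n; rewrite mul0r addr0 shiftc_delta => <-.
by rewrite gfcoef_inM !shiftG; ring.
Qed.

End GeneratingFunctions.

Local Open Scope ring_scope.

Theorem proposition6 (k : nat) (hk : (2 <= k)%N) :
  (* M is a free monoid *)
  free_monoid (inM k)
  /\
  (* its primes are exactly (2,1^(k-2),1^i,q), q empty or a Fibonacci
     composition starting with 2 not containing (2,1^(k-2)) as a block *)
  (forall c : seq nat,
     primeS (inM k) c <->
     exists (i : nat) (q : seq nat),
       c = blk k ++ nseq i 1%N ++ q /\
       (q = [::] \/ [/\ fibcomp q, head 0%N q = 2%N & ~~ infix (blk k) q]))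
  /\
  (* generating function of the primes P(x) = x^k/(1-x-x^2+x^k), i.e.
     (1 - x - x^2 + x^k) P(x) = x^k as formal power series *)
  (forall n : nat,
     gfcoef (primeS (inM k)) n - shiftc (gfcoef (primeS (inM k))) 1 n
       - shiftc (gfcoef (primeS (inM k))) 2 n + shiftc (gfcoef (primeS (inM k))) k n
     = (n == k)%:R)
  /\
  (* the generating function G(x) of M equals 1 + x^k/(1-x-x^2), i.e.
     (1-x-x^2) G(x) = 1 - x - x^2 + x^k ... *)
  (forall n : nat,
     gfcoef (inM k) n - shiftc (gfcoef (inM k)) 1 n - shiftc (gfcoef (inM k)) 2 n
     = (n == 0%N)%:R - (n == 1%N)%:R - (n == 2%N)%:R + (n == k)%:R)
  /\
  (* ... and equals (1 - P(x))^{-1}, i.e. G(x) (1 - P(x)) = 1 *)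
  (forall n : nat,
     gfcoef (inM k) n
       - \sum_(j < n.+1) gfcoef (primeS (inM k)) j * gfcoef (inM k) (n - j)%N
     = (n == 0%N)%:R).
Proof.
have k_gt0 : (0 < k)%N by apply: leq_trans hk.
split; first exact: free_inM.
split; first exact: prime_form.
split; first exact: primes_series.
split; first exact: inM_series.
exact: series_inverse k_gt0 (inM_series hk) (primes_series hk).
Qed.
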